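(* Let $c$ be any real number. For each finite-dimensional system $A$ and $\rho\in\mathfrak{S}(A)$ define $\Theta_\rho:\mathfrak{B}(A)\to\mathfrak{B}(A)$ by $\Theta_\rho(M)=\tfrac12\{\rho,M\}+ic[\rho,M]$, and define $\mathcal{E}_{B|A}\star\rho_A:=(\Theta_\rho\otimes\mathrm{id}_B)(\mathscr{D}[\mathcal{E}_{B|A}])$ for channels $\mathcal{E}_{B|A}$ and states $\rho_A$ (with action on subsystems defined by $\mathcal{E}\star\rho_{AE}:=((\mathcal{E}\star\cdot)\otimes\mathrm{id}_E)(\rho_{AE})$). Then $\star$ is a state over time function satisfying axioms (H), (E), (P), (CC), (J) and (QC).
   Context: All systems are finite-dimensional Hilbert spaces; a system may also be a subspace of a larger Hilbert space. $\mathfrak{B}(A)$: linear operators; $\mathfrak{S}(A)$: density operators; $\mathfrak{C}(A,B)$: quantum channels (CPTP maps $\mathfrak{B}(A)\to\mathfrak{B}(B)$). $|A|=\dim A$, $\mathbb{1}_A$ identity (also the projector onto $A$ when $A$ is a subspace), $\pi_A=\mathbb{1}_A/|A|$, $A'$ a copy of $A$, $F_{AA'}$ swap, $\mathrm{Ad}_X(Y)=XYX^\dagger$, $[X,Y]=XY-YX$, $\{X,Y\}=XY+YX$. $\mathcal{E}_{B|A'}$ is $\mathcal{E}_{B|A}$ acting on $A'$. Jamiołkowski state: $\mathscr{D}[\mathcal{E}]=(\mathrm{id}_A\otimes\mathcal{E}_{B|A'})(F_{AA'})$. A state over time function assigns to all systems $A,B$ a map $\star:\mathfrak{C}(A,B)\times\mathfrak{S}(A)\to\mathfrak{B}(A\otimes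 B)$ with $\mathrm{Tr}_A[\mathcal{E}\star\rho]=\mathcal{E}(\rho)$, $\mathrm{Tr}_B[\mathcal{E}\star\rho]=\rho$, extended homogeneously by $(\lambda\mathcal{E})\star\rho=\mathcal{E}\star(\lambda\rho)=\lambda(\mathcal{E}\star\rho)$ (so $\mathcal{E}\star\mathbb{1}_A=|A|\,\mathcal{E}\star\pi_A$). A quantum state over spacetime on $A\otimes E$ is a density operator or an operator of the form $\mathcal{F}\star\sigma$. (H): $\mathcal{E}\star\rho$ is Hermitian for all channels and states. (E): for all $A,B,E$, every quantum state over spacetime $\rho_{AE}$ and channel $\mathcal{E}_{B|A}$, $\mathcal{E}_{B|A}\star\rho_{AE}$ on $A\otimes B\otimes E$ is defined with $\mathcal{I}_E[\mathcal{E}\star\rho_{AE}]=\mathcal{E}\star\mathcal{I}_E(\rho_{AE})$ for every completely positive trace-non-increasing $\mathcal{I}_E$ on $E$, and $\mathrm{Tr}_A[\mathcal{E}\star\rho_{AE}]=(\mathcal{E}\otimes\mathrm{id}_E)(\rho_{AE})$. (P): $\mathrm{Tr}_B[\mathcal{F}_{C|B}\star(\mathcal{E}_{B|A}\star\rho_A)]=(\mathcal{F}\circ\mathcal{E})_{C|A}\star\rho_A$ for all channels $\mathcal{E}_{B|A},\mathcal{F}_{C|B}$ and states $\rho_A$, with $\mathcal{F}_{C|B}\star(\cdot)$ acting on the $B$-part (spectator $A$). (CC): for every orthogonal decomposition $A=\bigoplus_iA_i$, every channel $\mathcal{E}_{B|A}$ with $\mathcal{E}\circ(\sum_i\mathrm{Ad}_{\mathbb{1}_{A_i}})=\mathcal{E}$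 and every probability distribution $\{\lambda_i\}$: $\mathcal{E}\star(\sum_i\lambda_i\pi_{A_i})=\sum_i\lambda_i\,\mathcal{E}_{B|A_i}\star\pi_{A_i}$, with $\mathcal{E}_{B|A_i}=\mathcal{E}\circ\mathrm{Ad}_{\mathbb{1}_{A_i}}$ viewed as a channel from the subspace system $A_i$ to $B$. (J): for every system $A$, including subspaces of larger systems, and every channel: $\mathcal{E}_{B|A}\star\pi_A=|A|^{-1}\mathscr{D}[\mathcal{E}]$. (QC): for every $\rho\in\mathfrak{S}(A)$ there is a linear map $\Theta_\rho$ on $\mathfrak{B}(A)$ with $\mathcal{E}_{B|A}\star\rho_A=(\Theta_\rho\otimes\mathrm{id}_B)(\mathcal{E}_{B|A}\star\mathbb{1}_A)$ for all $\mathcal{E}\in\mathfrak{C}(A,B)$, and $\Theta_\rho(M)=\rho M$ whenever $[\rho,M]=0$. *)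

From HB Require Import structures.
From mathcomp Require Import all_boot all_order all_algebra.
From mathcomp Require Import complex mxtens.
From mathcomp Require Import reals.

Set Implicit Arguments.
Unset Strict Implicit.
Unset Printing Implicit Defensive.
Import Order.TTheory GRing.Theory Num.Theory.
Local Open Scope ring_scope.

(* Systems are finite-dimensional Hilbert spaces C^n; operators on A are
   'M[C]_n; operators on A (x) B are 'M[C]_(n*m), the factor pairing being
   mathcomp's Kronecker index  mxtens_index (a, b)  (so  A *t B  is the
   tensor product of operators).  Linear maps B(A) -> B(B) are plain
   functions 'M_n -> 'M_m (linearity is an explicit hypothesis). *)

Section QDefs.
Variable C : numClosedFieldType.

Definition idx {n m : nat} (a : 'I_n) (b : 'I_m) : 'I_(n * m) :=
  mxtens_index (a, b).
Definition fst_ {n m : nat} (i : 'I_(n * m)) : 'I_n := (mxtens_unindex i).1.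
Definition snd_ {n m : nat} (i : 'I_(n * m)) : 'I_m := (mxtens_unindex i).2.

Definition adjmx {n m : nat} (M : 'M[C]_(n, m)) : 'M[C]_(m, n) :=
  \matrix_(i, j) (M j i)^*.

Definition hermitian {n : nat} (M : 'M[C]_n) : Prop := adjmx M = M.

Definition psd {n : nat} (M : 'M[C]_n) : Prop :=
  forall v : 'cV[C]_n, 0 <= (adjmx v *m M *m v) 0 0.

Definition density {n : nat} (rho : 'M[C]_n) : Prop :=
  psd rho /\ \tr rho = 1.

Definition pimx (n : nat) : 'M[C]_n := (n%:R)^-1 *: 1%:M.

Definition blkL {n k : nat} (X : 'M[C]_(n * k)) (e e' : 'I_k) : 'M[C]_n :=
  \matrix_(a, a') X (idx a e) (idx a' e').
Definition blkR {k n : nat} (X : 'M[C]_(k * n)) (e e' : 'I_k) : 'M[C]_n :=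
  \matrix_(a, a') X (idx e a) (idx e' a').

(* Phi (x) id_E  on  B(A (x) E) *)
Definition mapL {n p k : nat} (Phi : 'M[C]_n -> 'M[C]_p) (X : 'M[C]_(n * k))
  : 'M[C]_(p * k) :=
  \matrix_(i, j) Phi (blkL X (snd_ i) (snd_ j)) (fst_ i) (fst_ j).

(* id_K (x) Phi  on  B(K (x) A) *)
Definition mapR {k n p : nat} (Phi : 'M[C]_n -> 'M[C]_p) (X : 'M[C]_(k * n))
  : 'M[C]_(k * p) :=
  \matrix_(i, j) Phi (blkR X (fst_ i) (fst_ j)) (snd_ i) (snd_ j).

Definition ptrA {n m : nat} (X : 'M[C]_(n * m)) : 'M[C]_m :=
  \sum_(a < n) blkR X a a.
Definition ptrB {n m : nat} (X : 'M[C]_(n * m)) : 'M[C]_n :=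
  \sum_(b < m) blkL X b b.

(* Tr_A on (A (x) B) (x) E *)
Definition ptrA3 {n m k : nat} (X : 'M[C]_((n * m) * k)) : 'M[C]_(m * k) :=
  \matrix_(i, j) \sum_(a < n)
     X (idx (idx a (fst_ i)) (snd_ i)) (idx (idx a (fst_ j)) (snd_ j)).

(* Tr_B on A (x) (B (x) C) *)
Definition ptrB3 {n m p : nat} (X : 'M[C]_(n * (m * p))) : 'M[C]_(n * p) :=
  \matrix_(i, j) \sum_(b < m)
     X (idx (fst_ i) (idx b (snd_ i))) (idx (fst_ j) (idx b (snd_ j))).

Definition swapmx (n : nat) : 'M[C]_(n * n) :=
  \sum_(i < n) \sum_(j < n) (delta_mx i j *t delta_mx j i).

(* Jamiolkowski operator D[E] = (id_A (x) E_{B|A'})(F_{AA'}) *)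
Definition jam {n m : nat} (E : 'M[C]_n -> 'M[C]_m) : 'M[C]_(n * m) :=
  mapR E (swapmx n).

Definition linmap {n m : nat} (f : 'M[C]_n -> 'M[C]_m) : Prop :=
  forall (a : C) (x y : 'M[C]_n), f (a *: x + y) = a *: f x + f y.

Definition CPmap {n m : nat} (f : 'M[C]_n -> 'M[C]_m) : Prop :=
  forall (k : nat) (X : 'M[C]_(k * n)), psd X -> psd (mapR f X).

Definition TPmap {n m : nat} (f : 'M[C]_n -> 'M[C]_m) : Prop :=
  forall X : 'M[C]_n, \tr (f X) = \tr X.

Definition TNImap {n m : nat} (f : 'M[C]_n -> 'M[C]_m) : Prop :=
  forall X : 'M[C]_n, psd X -> \tr (f X) <= \tr X.

Definition channel {n m : nat} (f : 'M[C]_n -> 'M[C]_m) : Prop :=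
  [/\ linmap f, CPmap f & TPmap f].

Definition starT := forall n m : nat,
  ('M[C]_n -> 'M[C]_m) -> 'M[C]_n -> 'M[C]_(n * m).

Definition state_over_time (star : starT) : Prop :=
  (forall n m (E : 'M[C]_n -> 'M[C]_m) (rho : 'M[C]_n),
     channel E -> density rho ->
     ptrA (star n m E rho) = E rho /\ ptrB (star n m E rho) = rho)
  /\
  (forall n m (E : 'M[C]_n -> 'M[C]_m) (rho : 'M[C]_n) (l : C),
     channel E -> density rho ->
     star n m (fun X => l *: E X) rho = l *: star n m E rho
     /\ star n m E (l *: rho) = l *: star n m E rho).

Definition spacetime_state (star : starT) {n k : nat} (X : 'M[C]_(n * k))
  : Prop :=
  density X \/
  exists (F : 'M[C]_n -> 'M[C]_k) (sigma : 'M[C]_n),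
    [/\ channel F, density sigma & X = star n k F sigma].

Definition axiom_H (star : starT) : Prop :=
  forall n m (E : 'M[C]_n -> 'M[C]_m) (rho : 'M[C]_n),
    channel E -> density rho -> hermitian (star n m E rho).

Definition axiom_E (star : starT) : Prop :=
  forall n m k (E : 'M[C]_n -> 'M[C]_m) (rhoAE : 'M[C]_(n * k)),
    channel E -> spacetime_state star rhoAE ->
    (forall I : 'M[C]_k -> 'M[C]_k, linmap I -> CPmap I -> TNImap I ->
       mapR (k := n * m) I (mapL (star n m E) rhoAE)
       = mapL (star n m E) (mapR I rhoAE))
    /\ ptrA3 (mapL (star n m E) rhoAE) = mapL E rhoAE.

Definition axiom_P (star : starT) : Prop :=
  forall n m p (E : 'M[C]_n -> 'M[C]_m) (F : 'M[C]_m -> 'M[C]_p)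
         (rho : 'M[C]_n),
    channel E -> channel F -> density rho ->
    ptrB3 (mapR (k := n) (star m p F) (star n m E rho))
    = star n p (F \o E) rho.

(* embedding of an operator on the subspace system A_i (x) B into A (x) B,
   the subspace A_i being the range of the isometry V *)
Definition embed {n d m : nat} (V : 'M[C]_(n, d)) (Z : 'M[C]_(d * m))
  : 'M[C]_(n * m) :=
  (V *t (1%:M : 'M[C]_m)) *m Z *m adjmx (V *t (1%:M : 'M[C]_m)).

Definition axiom_CC (star : starT) : Prop :=
  forall n m (r : nat) (d : 'I_r -> nat) (V : forall i : 'I_r, 'M[C]_(n, d i))
         (E : 'M[C]_n -> 'M[C]_m) (lam : 'I_r -> C),
    (* orthogonal decomposition A = (+)_i A_i, A_i = range (V i) *)
    (forall i, (0 < d i)%N) ->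
    (forall i, adjmx (V i) *m V i = 1%:M) ->
    (forall i j, i != j -> adjmx (V i) *m V j = 0) ->
    \sum_(i < r) V i *m adjmx (V i) = 1%:M ->
    channel E ->
    (forall X : 'M[C]_n,
       E (\sum_(i < r) (V i *m adjmx (V i)) *m X *m (V i *m adjmx (V i)))
       = E X) ->
    (forall i, 0 <= lam i) -> \sum_(i < r) lam i = 1 ->
    star n m E (\sum_(i < r) lam i *: ((d i)%:R^-1 *: (V i *m adjmx (V i))))
    = \sum_(i < r) lam i *:
        embed (V i)
          (star (d i) m (fun Y => E (V i *m Y *m adjmx (V i))) (pimx (d i))).

Definition axiom_J (star : starT) : Prop :=
  forall n m (E : 'M[C]_n -> 'M[C]_m),
    channel E -> star n m E (pimx n) = (n%:R)^-1 *: jam E.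

Definition axiom_QC (star : starT) : Prop :=
  forall n (rho : 'M[C]_n), density rho ->
    exists Theta : 'M[C]_n -> 'M[C]_n,
      [/\ linmap Theta,
          (forall m (E : 'M[C]_n -> 'M[C]_m), channel E ->
             star n m E rho = mapL Theta (star n m E 1%:M))
        & (forall M : 'M[C]_n, rho *m M = M *m rho -> Theta M = rho *m M)].

(* Theta_rho(M) = 1/2 {rho, M} + i c [rho, M]; the imaginary unit iu is
   passed explicitly (the statement instantiates it with Complex 0 1) *)
Definition ThetaC (iu c : C) {n : nat} (rho : 'M[C]_n) (M : 'M[C]_n) : 'M[C]_n :=
  (2%:R)^-1 *: (rho *m M + M *m rho) + (iu * c) *: (rho *m M - M *m rho).

Definition starC (iu c : C) : starT :=
  fun n m E rho => mapL (ThetaC iu c rho) (jam E).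

End QDefs.

Set Warnings "-notation-overridden,-ambiguous-paths,-parsing,-coercions".
From Pilot Require Import Defs.
From HB Require Import structures.
From mathcomp Require Import all_boot all_order all_algebra.
From mathcomp Require Import complex mxtens.
From mathcomp Require Import reals.
From mathcomp Require Import ring.

(* With J = D[E] the Jamiolkowski operator, E * rho = (Theta_rho (x) id)(J).  The axioms
   follow from elementary identities for Phi (x) id and id (x) Psi (they commute, compose,
   and commute with partial traces of the other factor) and four properties of Theta_rho:
   it is linear in rho and in M; Theta_rho(M) = rho M when [rho, M] = 0, which gives (J),
   (QC), and Tr_B = rho because Tr_B J = 1; tr Theta_rho(M) = tr (rho M), which gives
   Tr_A = E(rho) because Tr_A[(rho (x) 1) J] = E(rho); and Theta_rho(M)^dag =
   Theta_rho(M^dag) for Hermitian rho because ic is imaginary, which gives (H) since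
   complete positivity makes J Hermitian (by polarization).  For (CC), the transpose trick
   (id (x) E o Ad_V)(F) = (Ad_{V^dag} (x) E)(F) moves the block projections onto the first
   factor, where a state equal to the scalar mu_i on each block A_i acts through Theta_rho
   as multiplication by mu_i. *)

Set Implicit Arguments.
Unset Strict Implicit.
Unset Printing Implicit Defensive.
Import GRing.Theory Num.Theory.
Local Open Scope ring_scope.

Section StateOverTime.
Variable C : numClosedFieldType.
Local Notation M n := 'M[C]_n.

Lemma fst_idx n m (a : 'I_n) (b : 'I_m) : fst_ (idx a b) = a.
Proof. by rewrite /fst_ /idx mxtens_indexK. Qed.

Lemma snd_idx n m (a : 'I_n) (b : 'I_m) : snd_ (idx a b) = b.
Proof. by rewrite /snd_ /idx mxtens_indexK. Qed.

Lemma eq_idx n m (a a' : 'I_n) (b b' : 'I_m) :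
  (idx a b == idx a' b') = (a == a') && (b == b').
Proof. by rewrite /idx (can_eq (@mxtens_indexK n m)) xpair_eqE. Qed.

Lemma mx_idx_ext n m p q (X Y : 'M[C]_(n * m, p * q)) :
  (forall a b a' b', X (idx a b) (idx a' b') = Y (idx a b) (idx a' b')) ->
  X = Y.
Proof.
move=> XY; apply/matrixP => i j.
by case: (mxtens_indexP i) => a b; case: (mxtens_indexP j) => a' b'; apply: XY.
Qed.

Lemma delta_mx_tens n m (a a' : 'I_n) (b b' : 'I_m) :
  delta_mx (idx a b) (idx a' b') = delta_mx a a' *t delta_mx b b' :> M (n * m).
Proof.
apply: mx_idx_ext => x y x' y'; rewrite tensmxE !mxE !eq_idx.
by case: (x == a); case: (y == b); case: (x' == a'); case: (y' == b');
  rewrite ?mulr0 ?mul0r ?mulr1.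
Qed.

Lemma mul_delta_mxE n d p (A : 'M[C]_(n, d)) (B : 'M[C]_(d, p)) c c' x y :
  (A *m delta_mx c c' *m B) x y = A x c * B c' y.
Proof.
rewrite -(mul_delta_mx (0 : 'I_1)) mulmxA -(mulmxA _ (delta_mx 0 c')).
by rewrite -colE -rowE mxE big_ord1 !mxE.
Qed.

Lemma mxtrace_mul_delta n (A : M n) x y : \tr (A *m delta_mx x y) = A y x.
Proof.
rewrite -[A *m _]mulmx1 /mxtrace.
under eq_bigr do rewrite mul_delta_mxE mxE.
rewrite (bigD1 y) //= eqxx mulr1 big1 ?addr0 // => i /negbTE.
by rewrite eq_sym => ->; rewrite mulr0.
Qed.

Lemma mxtrace_delta n (x y : 'I_n) : \tr (delta_mx x y : M n) = (x == y)%:R.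
Proof. by rewrite -[delta_mx _ _]mul1mx mxtrace_mul_delta mxE eq_sym. Qed.

Section Linmap.
Variables (n p : nat) (f : M n -> M p).
Hypothesis f_lin : linmap f.

Lemma linmap0 : f 0 = 0.
Proof.
have := f_lin 1 0 0; rewrite !scale1r addr0 => f00.
by apply: (addIr (f 0)); rewrite add0r -f00.
Qed.

Lemma linmapD x y : f (x + y) = f x + f y.
Proof. by have := f_lin 1 x y; rewrite !scale1r. Qed.

Lemma linmapZ a x : f (a *: x) = a *: f x.
Proof. by have := f_lin a x 0; rewrite !addr0 linmap0 addr0. Qed.

Lemma linmap_sum I r (P : pred I) F :
  f (\sum_(i <- r | P i) F i) = \sum_(i <- r | P i) f (F i).
Proof. exact: (big_morph f linmapD linmap0). Qed.

Lemma linmap_delta_expand x : f x = \sum_i \sum_j x i j *: f (delta_mx i j).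
Proof.
rewrite {1}(matrix_sum_delta x) linmap_sum; apply: eq_bigr => i _.
by rewrite linmap_sum; apply: eq_bigr => j _; rewrite linmapZ.
Qed.

End Linmap.

Lemma linmap_tens_ext n k p (f g : M (n * k) -> M p) :
  linmap f -> linmap g ->
  (forall (A : M n) (B : M k), f (A *t B) = g (A *t B)) -> forall X, f X = g X.
Proof.
move=> f_lin g_lin fg X.
rewrite (linmap_delta_expand f_lin) (linmap_delta_expand g_lin).
apply: eq_bigr => i _; apply: eq_bigr => j _; congr (_ *: _).
case: (mxtens_indexP i) => a e; case: (mxtens_indexP j) => a' e'.
by rewrite -[mxtens_index _]/(idx a e) -[mxtens_index (a', e')]/(idx a' e')
  delta_mx_tens fg.
Qed.

Lemma mapLE n p k (f : M n -> M p) (X : M (n * k)) a b a' b' :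
  mapL f X (idx a b) (idx a' b') = f (blkL X b b') a a'.
Proof. by rewrite mxE !fst_idx !snd_idx. Qed.

Lemma mapRE k n p (f : M n -> M p) (X : M (k * n)) a b a' b' :
  mapR f X (idx a b) (idx a' b') = f (blkR X a a') b b'.
Proof. by rewrite mxE !fst_idx !snd_idx. Qed.

Lemma blkL_mapL n p k (f : M n -> M p) (X : M (n * k)) e e' :
  blkL (mapL f X) e e' = f (blkL X e e').
Proof. by apply/matrixP => a a'; rewrite mxE mapLE. Qed.

Lemma blkR_mapR k n p (f : M n -> M p) (X : M (k * n)) e e' :
  blkR (mapR f X) e e' = f (blkR X e e').
Proof. by apply/matrixP => a a'; rewrite mxE mapRE. Qed.

Lemma eq_mapL n p k (f g : M n -> M p) (X : M (n * k)) :
  (forall Y, f Y = g Y) -> mapL f X = mapL g X.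
Proof. by move=> fg; apply/matrixP => i j; rewrite !mxE fg. Qed.

Lemma eq_mapR k n p (f g : M n -> M p) (X : M (k * n)) :
  (forall Y, f Y = g Y) -> mapR f X = mapR g X.
Proof. by move=> fg; apply/matrixP => i j; rewrite !mxE fg. Qed.

Lemma mapL_comp n p q k (f : M n -> M p) (g : M p -> M q) (X : M (n * k)) :
  mapL g (mapL f X) = mapL (g \o f) X.
Proof. by apply/matrixP => i j; rewrite !mxE blkL_mapL. Qed.

Lemma mapR_comp k n p q (f : M n -> M p) (g : M p -> M q) (X : M (k * n)) :
  mapR g (mapR f X) = mapR (g \o f) X.
Proof. by apply/matrixP => i j; rewrite !mxE blkR_mapR. Qed.

Lemma mapL_id n k (X : M (n * k)) : mapL id X = X.
Proof. by apply: mx_idx_ext => a b a' b'; rewrite mapLE mxE. Qed.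

Lemma mapLZ n p k (a : C) (f : M n -> M p) (X : M (n * k)) :
  mapL (fun Y => a *: f Y) X = a *: mapL f X.
Proof. by apply/matrixP => i j; rewrite !mxE. Qed.

Lemma mapL_lincomb n p k (a : C) (f g : M n -> M p) (X : M (n * k)) :
  mapL (fun Y => a *: f Y + g Y) X = a *: mapL f X + mapL g X.
Proof. by apply/matrixP => i j; rewrite !mxE. Qed.

Lemma mapRZ k n p (a : C) (f : M n -> M p) (X : M (k * n)) :
  mapR (fun Y => a *: f Y) X = a *: mapR f X.
Proof. by apply/matrixP => i j; rewrite !mxE. Qed.

Lemma mapL_linmap n p k (f : M n -> M p) : linmap f -> linmap (mapL (k := k) f).
Proof.
move=> f_lin a X Y; apply/matrixP => i j; rewrite !mxE.
have -> : blkL (a *: X + Y) (snd_ i) (snd_ j)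
          = a *: blkL X (snd_ i) (snd_ j) + blkL Y (snd_ i) (snd_ j).
  by apply/matrixP => x y; rewrite !mxE.
by rewrite f_lin !mxE.
Qed.

Lemma mapR_linmap k n p (f : M n -> M p) : linmap f -> linmap (mapR (k := k) f).
Proof.
move=> f_lin a X Y; apply/matrixP => i j; rewrite !mxE.
have -> : blkR (a *: X + Y) (fst_ i) (fst_ j)
          = a *: blkR X (fst_ i) (fst_ j) + blkR Y (fst_ i) (fst_ j).
  by apply/matrixP => x y; rewrite !mxE.
by rewrite f_lin !mxE.
Qed.

Lemma mapL_tens n p k (f : M n -> M p) (A : M n) (B : M k) :
  linmap f -> mapL f (A *t B) = f A *t B.
Proof.
move=> f_lin; apply: mx_idx_ext => a b a' b'; rewrite mapLE tensmxE.
have -> : blkL (A *t B) b b' = B b b' *: A.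
  by apply/matrixP => x y; rewrite [LHS]mxE tensmxE mxE mulrC.
by rewrite (linmapZ f_lin) mxE mulrC.
Qed.

Lemma mapR_tens k n p (f : M n -> M p) (A : M k) (B : M n) :
  linmap f -> mapR f (A *t B) = A *t f B.
Proof.
move=> f_lin; apply: mx_idx_ext => a b a' b'; rewrite mapRE tensmxE.
have -> : blkR (A *t B) a a' = A a a' *: B.
  by apply/matrixP => x y; rewrite [LHS]mxE tensmxE mxE.
by rewrite (linmapZ f_lin) mxE.
Qed.

Lemma mapLR_comm n p k q (f : M n -> M p) (g : M k -> M q) (X : M (n * k)) :
  linmap f -> linmap g -> mapR g (mapL f X) = mapL f (mapR g X).
Proof.
move=> f_lin g_lin; move: X; apply: linmap_tens_ext => [||A B].
- by move=> a Y Z; rewrite (mapL_linmap f_lin) (mapR_linmap g_lin).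
- by move=> a Y Z; rewrite (mapR_linmap g_lin) (mapL_linmap f_lin).
by rewrite !mapL_tens // !mapR_tens // mapL_tens.
Qed.

Lemma ptrA3_mapL n m k (f : M n -> M (n * m)) (X : M (n * k)) :
  ptrA3 (mapL f X) = mapL (fun Y => ptrA (f Y)) X.
Proof.
apply: mx_idx_ext => b e b' e'; rewrite mapLE mxE !fst_idx !snd_idx summxE.
by apply: eq_bigr => a _; rewrite mapLE mxE.
Qed.

Lemma ptrB3_mapR n m p (f : M m -> M (m * p)) (X : M (n * m)) :
  ptrB3 (mapR f X) = mapR (fun Y => ptrA (f Y)) X.
Proof.
apply: mx_idx_ext => a c a' c'; rewrite mapRE mxE !fst_idx !snd_idx summxE.
by apply: eq_bigr => b _; rewrite mapRE mxE.
Qed.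

Lemma ptrB_mapL n p k (f : M n -> M p) (X : M (n * k)) :
  linmap f -> ptrB (mapL f X) = f (ptrB X).
Proof.
move=> f_lin; rewrite /ptrB (linmap_sum f_lin).
by apply: eq_bigr => e _; rewrite blkL_mapL.
Qed.

Lemma ptrA_mapL_mxtrace n p q k (f : M n -> M p) (g : M n -> M q)
    (X : M (n * k)) :
  (forall Y, \tr (f Y) = \tr (g Y)) -> ptrA (mapL f X) = ptrA (mapL g X).
Proof.
move=> tr_fg; apply/matrixP => b b'; rewrite !summxE.
have tr_mapL (h : M n -> M _) :
    \sum_(a < _) blkR (mapL h X) a a b b' = \tr (h (blkL X b b')).
  by apply: eq_bigr => a _; rewrite mxE mapLE.
by rewrite !tr_mapL tr_fg.
Qed.

Lemma blkR_swapmx n (a a' : 'I_n) : blkR (swapmx C n) a a' = delta_mx a' a.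
Proof.
apply/matrixP => b b'; rewrite mxE summxE (bigD1 a) //= [X in _ + X]big1.
  rewrite addr0 summxE (bigD1 a') //= [X in _ + X]big1.
    by rewrite addr0 tensmxE [X in X * _]mxE !eqxx mul1r.
  by move=> j /negbTE ne; rewrite tensmxE mxE eqxx eq_sym ne mul0r.
move=> i /negbTE ne; rewrite summxE big1 // => j _.
by rewrite tensmxE mxE eq_sym ne mul0r.
Qed.

Lemma jamE n m (E : M n -> M m) a b a' b' :
  jam E (idx a b) (idx a' b') = E (delta_mx a' a) b b'.
Proof. by rewrite mapRE blkR_swapmx. Qed.

Lemma eq_jam n m (f g : M n -> M m) : (forall X, f X = g X) -> jam f = jam g.
Proof. exact: eq_mapR. Qed.

Lemma jam_sum n m I r (P : pred I) (F : I -> M n -> M m) :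
  jam (fun X => \sum_(i <- r | P i) F i X) = \sum_(i <- r | P i) jam (F i).
Proof.
apply: mx_idx_ext => a b a' b'; rewrite jamE !summxE.
by apply: eq_bigr => i _; rewrite jamE.
Qed.

Lemma jam_sandwich n d m (A : 'M[C]_(d, n)) (B : 'M[C]_(n, d)) (g : M n -> M m) :
  linmap g -> jam (fun Y => g (B *m Y *m A)) = mapL (fun X => A *m X *m B) (jam g).
Proof.
move=> g_lin; apply: mx_idx_ext => c b c' b'.
rewrite jamE mapLE (linmap_delta_expand g_lin) summxE mxE.
apply: eq_bigr => y _; rewrite summxE mxE mulr_suml; apply: eq_bigr => x _.
by rewrite [LHS]mxE mul_delta_mxE mxE jamE; ring.
Qed.

Lemma ptrB_jam n m (E : M n -> M m) : TPmap E -> ptrB (jam E) = 1%:M.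
Proof.
move=> E_tp; apply/matrixP => x y; rewrite summxE.
under eq_bigr do rewrite mxE jamE.
by rewrite -[LHS]/(\tr _) E_tp mxtrace_delta mxE eq_sym.
Qed.

Lemma ptrA_mulmx_jam n m (E : M n -> M m) (rho : M n) :
  linmap E -> ptrA (mapL (mulmx rho) (jam E)) = E rho.
Proof.
move=> E_lin; apply/matrixP => b b'.
rewrite summxE (linmap_delta_expand E_lin) summxE.
apply: eq_bigr => a _; rewrite summxE mxE mapLE mxE; apply: eq_bigr => x _.
by rewrite mxE (jamE E x b a b') mxE.
Qed.

Lemma adjmxK n m (A : 'M[C]_(n, m)) : adjmx (adjmx A) = A.
Proof. by apply/matrixP => i j; rewrite !mxE conjCK. Qed.

Lemma adjmxD n m (A B : 'M[C]_(n, m)) : adjmx (A + B) = adjmx A + adjmx B.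
Proof. by apply/matrixP => i j; rewrite !mxE rmorphD. Qed.

Lemma adjmxB n m (A B : 'M[C]_(n, m)) : adjmx (A - B) = adjmx A - adjmx B.
Proof. by apply/matrixP => i j; rewrite !mxE rmorphB. Qed.

Lemma adjmxZ n m a (A : 'M[C]_(n, m)) : adjmx (a *: A) = a^* *: adjmx A.
Proof. by apply/matrixP => i j; rewrite !mxE rmorphM. Qed.

Lemma adjmxM n m p (A : 'M[C]_(n, m)) (B : 'M[C]_(m, p)) :
  adjmx (A *m B) = adjmx B *m adjmx A.
Proof.
apply/matrixP => i j; rewrite !mxE rmorph_sum; apply: eq_bigr => k _.
by rewrite !mxE rmorphM mulrC.
Qed.

Lemma adjmx_tens n m p q (A : 'M[C]_(n, p)) (B : 'M[C]_(m, q)) :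
  adjmx (A *t B) = adjmx A *t adjmx B.
Proof. by apply/matrixP => i j; rewrite !mxE rmorphM. Qed.

Lemma adjmx_delta n m (i : 'I_n) (j : 'I_m) :
  adjmx (delta_mx i j : 'M[C]_(n, m)) = delta_mx j i.
Proof. by apply/matrixP => a b; rewrite !mxE rmorph_nat andbC. Qed.

Lemma adjmx_scalar n a : adjmx (a%:M : M n) = a^*%:M.
Proof. by apply/matrixP => i j; rewrite !mxE rmorphMn eq_sym. Qed.

Lemma blkL_adjmx n k (X : M (n * k)) e e' :
  blkL (adjmx X) e e' = adjmx (blkL X e' e).
Proof. by apply/matrixP => a a'; rewrite !mxE. Qed.

Lemma adjmx_mapL n p k (f : M n -> M p) (X : M (n * k)) :
  adjmx (mapL f X) = mapL (fun Y => adjmx (f (adjmx Y))) (adjmx X).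
Proof.
by apply: mx_idx_ext => a b a' b'; rewrite !mapLE mxE mapLE blkL_adjmx adjmxK mxE.
Qed.

Lemma psd_rank1 n (u : 'cV[C]_n) : psd (u *m adjmx u).
Proof.
move=> w; rewrite mulmxA -mulmxA -(adjmxK w) -adjmxM adjmxK.
by move: (adjmx w *m u) => x; rewrite mxE big_ord1 mxE mul_conjC_ge0.
Qed.

(* Polarization: use the hypothesis at v = e_x + z e_y for z = 1 and z = i. *)
Lemma adjmx_delta_of_rank1 n p (f : M n -> M p) :
  linmap f -> (forall v : 'cV[C]_n, Defs.hermitian (f (v *m adjmx v))) ->
  forall x y, adjmx (f (delta_mx x y)) = f (delta_mx y x).
Proof.
move=> f_lin f_herm x y; pose e i : 'cV[C]_n := delta_mx i 0.
have f_diag i : adjmx (f (delta_mx i i)) = f (delta_mx i i).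
  by have := f_herm (e i); rewrite adjmx_delta mul_delta_mx.
have polar z : z *: adjmx (f (delta_mx x y)) + z^* *: adjmx (f (delta_mx y x))
             = z^* *: f (delta_mx x y) + z *: f (delta_mx y x).
  have := f_herm (e x + z *: e y); rewrite /Defs.hermitian.
  rewrite adjmxD adjmxZ !adjmx_delta mulmxDl !mulmxDr -!scalemxAl -!scalemxAr.
  rewrite !mul_delta_mx !(linmapD f_lin) !(linmapZ f_lin) !adjmxD !adjmxZ !f_diag.
  by rewrite !conjCK !scalerA [z^* * z]mulrC !addrA => /addIr; rewrite -!addrA => /addrI.
have := polar 1; rewrite rmorph1 !scale1r => sum_eq.
have := polar 'i; rewrite conjCi !scaleNr => i_eq.
have diff_eq : adjmx (f (delta_mx x y)) - adjmx (f (delta_mx y x))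
               = f (delta_mx y x) - f (delta_mx x y).
  by apply: (scalerI (neq0Ci C)); rewrite !scalerBr i_eq addrC.
have := congr2 +%R sum_eq diff_eq.
rewrite addrACA subrr addr0 [f _ + f _]addrC addrACA subrr addr0 -!mulr2n.
by rewrite -!scaler_nat; apply: scalerI; rewrite pnatr_eq0.
Qed.

Lemma psd_hermitian n (Y : M n) : psd Y -> Defs.hermitian Y.
Proof.
move=> Y_psd; pose f (X : M n) : M 1 := (\tr (Y *m X))%:M.
have f_lin : linmap f.
  move=> a X X'; rewrite /f mulmxDr -scalemxAr mxtraceD mxtraceZ.
  by rewrite raddfD scale_scalar_mx.
have f_herm (v : 'cV[C]_n) : Defs.hermitian (f (v *m adjmx v)).
  rewrite /Defs.hermitian /f adjmx_scalar mulmxA mxtrace_mulC mulmxA trace_mx11.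
  by rewrite conj_Creal // ger0_real.
apply/matrixP => i j; have := adjmx_delta_of_rank1 f_lin f_herm i j.
by rewrite /f adjmx_scalar !mxtrace_mul_delta mxE => /matrixP /(_ 0 0); rewrite !mxE.
Qed.

Lemma CP_hermitian_rank1 n m (E : M n -> M m) (v : 'cV[C]_n) :
  linmap E -> CPmap E -> Defs.hermitian (E (v *m adjmx v)).
Proof.
move=> E_lin E_cp; pose u := (1%:M : M 1) *t v.
have uuE : u *m adjmx u = 1%:M *t (v *m adjmx v).
  by rewrite adjmx_tens tensmx_mul ?adjmx_scalar conjC1 mulmx1.
have := psd_hermitian (E_cp 1%N _ (psd_rank1 u)).
rewrite /Defs.hermitian uuE mapR_tens // adjmx_tens adjmx_scalar conjC1.
move=> eq1; apply/matrixP => b b'.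
have := congr1 (fun X : 'M[C]_(1 * m) => X (idx 0 b) (idx 0 b')) eq1.
by rewrite /= !tensmxE !mxE !mul1r.
Qed.

Lemma CP_adjmx_delta n m (E : M n -> M m) x y :
  linmap E -> CPmap E -> adjmx (E (delta_mx x y)) = E (delta_mx y x).
Proof.
move=> E_lin E_cp.
exact: adjmx_delta_of_rank1 E_lin (fun v => CP_hermitian_rank1 v E_lin E_cp) x y.
Qed.

Lemma jam_hermitian n m (E : M n -> M m) :
  (forall x y, adjmx (E (delta_mx x y)) = E (delta_mx y x)) -> Defs.hermitian (jam E).
Proof.
move=> E_herm; rewrite /Defs.hermitian; apply: mx_idx_ext => a b a' b'.
by rewrite [LHS]mxE (jamE E a' b') (jamE E a b) -(E_herm a a') mxE.
Qed.

Lemma linmap_sandwich n p (A : 'M[C]_(p, n)) (B : 'M[C]_(n, p)) :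
  linmap (fun Y : M n => A *m Y *m B).
Proof. by move=> a X Y; rewrite mulmxDr mulmxDl -scalemxAr -scalemxAl. Qed.

Lemma embed_mapL n d m (V : 'M[C]_(n, d)) (Z : M (d * m)) :
  embed V Z = mapL (fun Y => V *m Y *m adjmx V) Z.
Proof.
move: Z; apply: linmap_tens_ext => [a X Y||A B].
- by rewrite /embed mulmxDr mulmxDl -scalemxAr -scalemxAl.
- exact/mapL_linmap/linmap_sandwich.
rewrite mapL_tens; last exact: linmap_sandwich.
by rewrite /embed tensmx_mul adjmx_tens adjmx_scalar conjC1 tensmx_mul mul1mx mulmx1.
Qed.

Lemma mulmx_range_proj n r (d : 'I_r -> nat) (V : forall i, 'M[C]_(n, d i)) i j :
  (forall i, adjmx (V i) *m V i = 1%:M) ->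
  (forall i j, i != j -> adjmx (V i) *m V j = 0) ->
  V i *m adjmx (V i) *m (V j *m adjmx (V j))
  = if i == j then V i *m adjmx (V i) else 0.
Proof.
move=> V_iso V_orth; rewrite mulmxA -(mulmxA (V i)).
case: eqP => [<- | /eqP ne_ij]; first by rewrite V_iso mulmx1.
by rewrite V_orth // mulmx0 mul0mx.
Qed.

Section OrthogonalProjections.
Variables (n r : nat) (P : 'I_r -> M n) (mu : 'I_r -> C).
Hypothesis P_orth : forall i j, P i *m P j = if i == j then P i else 0.

Lemma mulmx_sum_proj i : (\sum_j mu j *: P j) *m P i = mu i *: P i.
Proof.
rewrite mulmx_suml (bigD1 i) //= big1 ?addr0 => [|j ne_ji].
  by rewrite -scalemxAl P_orth eqxx.
by rewrite -scalemxAl P_orth (negbTE ne_ji) scaler0.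
Qed.

Lemma mulmx_proj_sum i : P i *m (\sum_j mu j *: P j) = mu i *: P i.
Proof.
rewrite mulmx_sumr (bigD1 i) //= big1 ?addr0 => [|j ne_ji].
  by rewrite -scalemxAr P_orth eqxx.
by rewrite -scalemxAr P_orth eq_sym (negbTE ne_ji) scaler0.
Qed.

End OrthogonalProjections.

Section Theta.
Variables iu c : C.
Local Notation Th := (ThetaC iu c).
Local Notation star := (starC iu c).

Lemma Theta_linmap n (rho : M n) : linmap (Th rho).
Proof.
move=> a X Y; rewrite /ThetaC mulmxDr mulmxDl -!scalemxAr -!scalemxAl.
move: (rho *m X) (rho *m Y) (X *m rho) (Y *m rho) => u1 u2 w1 w2.
by apply/matrixP => i j; rewrite !mxE; ring.
Qed.

Lemma Theta_linmap_state n (Y : M n) : linmap (Th ^~ Y).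
Proof.
move=> a rho sigma; rewrite /ThetaC mulmxDr mulmxDl -!scalemxAr -!scalemxAl.
move: (rho *m Y) (sigma *m Y) (Y *m rho) (Y *m sigma) => u1 u2 w1 w2.
by apply/matrixP => i j; rewrite !mxE; ring.
Qed.

Lemma Theta_commute n (rho Y : M n) : rho *m Y = Y *m rho -> Th rho Y = rho *m Y.
Proof.
move=> rhoY; rewrite /ThetaC -rhoY subrr scaler0 addr0 -mulr2n -scaler_nat.
by rewrite scalerA mulVf ?pnatr_eq0 // scale1r.
Qed.

Lemma Theta_scalar n (s : C) (Y : M n) : Th s%:M Y = s *: Y.
Proof. by rewrite Theta_commute mul_scalar_mx // mul_mx_scalar. Qed.

Lemma Theta1 n (rho : M n) : Th rho 1%:M = rho.
Proof. by rewrite Theta_commute mulmx1 // mul1mx. Qed.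

Lemma Theta_mxtrace n (rho Y : M n) : \tr (Th rho Y) = \tr (rho *m Y).
Proof.
rewrite /ThetaC mxtraceD !mxtraceZ linearB /= (mxtrace_mulC Y) subrr mulr0 addr0.
rewrite mxtraceD (mxtrace_mulC Y).
by field.
Qed.

Lemma Theta_adjmx n (rho Y : M n) :
  (iu * c)^* = - (iu * c) -> Defs.hermitian rho ->
  adjmx (Th rho Y) = Th rho (adjmx Y).
Proof.
move=> k_imag rho_herm.
rewrite /ThetaC adjmxD !adjmxZ adjmxD adjmxB !adjmxM rho_herm k_imag fmorphV rmorph_nat.
move: (rho *m adjmx Y) (adjmx Y *m rho) => u w.
by apply/matrixP => i j; rewrite !mxE; ring.
Qed.

Lemma Theta_proj_block n r (P : 'I_r -> M n) (mu : 'I_r -> C) i (Y : M n) :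
  (forall i j, P i *m P j = if i == j then P i else 0) ->
  Th (\sum_j mu j *: P j) (P i *m Y *m P i) = mu i *: (P i *m Y *m P i).
Proof.
move=> P_orth; rewrite Theta_commute !mulmxA mulmx_sum_proj // -!scalemxAl //.
by rewrite -[RHS]mulmxA mulmx_proj_sum // -scalemxAr.
Qed.

Lemma starC_linmap n m (E : M n -> M m) : linmap (star E).
Proof.
move=> a rho sigma; rewrite /starC -mapL_lincomb.
by apply: eq_mapL => Y; exact: Theta_linmap_state.
Qed.

Lemma ptrA_starC n m (E : M n -> M m) rho : linmap E -> ptrA (star E rho) = E rho.
Proof.
move=> E_lin; rewrite /starC (ptrA_mapL_mxtrace (g := mulmx rho)) ?ptrA_mulmx_jam //.
exact: Theta_mxtrace.
Qed.

Lemma ptrB_starC n m (E : M n -> M m) rho : TPmap E -> ptrB (star E rho) = rho.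
Proof.
by move=> E_tp; rewrite /starC ptrB_mapL ?ptrB_jam ?Theta1 //; exact: Theta_linmap.
Qed.

Lemma starC1 n m (E : M n -> M m) : star E 1%:M = jam E.
Proof.
by rewrite -[RHS]mapL_id /starC; apply: eq_mapL => Y; rewrite Theta_scalar scale1r.
Qed.

Lemma starC_pimx n m (E : M n -> M m) : star E (pimx C n) = n%:R^-1 *: jam E.
Proof.
rewrite -[jam E]mapL_id -mapLZ /starC; apply: eq_mapL => Y.
by rewrite /pimx scale_scalar_mx mulr1 Theta_scalar.
Qed.

Lemma starC_state_over_time : state_over_time star.
Proof.
split=> [n m E rho [E_lin _ E_tp] _ | n m E rho l _ _].
  by rewrite ptrA_starC ?ptrB_starC.
split; last exact: (linmapZ (starC_linmap E)).
by rewrite /starC /jam mapRZ (linmapZ (mapL_linmap (Theta_linmap rho))).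
Qed.

Lemma starC_hermitian : (iu * c)^* = - (iu * c) -> axiom_H star.
Proof.
move=> k_imag n m E rho [E_lin E_cp _] [rho_psd _].
have jam_herm := jam_hermitian (fun x y => CP_adjmx_delta x y E_lin E_cp).
rewrite /Defs.hermitian /starC adjmx_mapL jam_herm; apply: eq_mapL => Y.
by rewrite Theta_adjmx ?adjmxK //; exact: psd_hermitian.
Qed.

Lemma starC_E : axiom_E star.
Proof.
move=> n m k E X [E_lin _ _] _; split.
  by move=> I I_lin _ _; apply: mapLR_comm I_lin; exact: starC_linmap.
by rewrite ptrA3_mapL; apply: eq_mapL => rho; exact: ptrA_starC.
Qed.

Lemma starC_P : axiom_P star.
Proof.
move=> n m p E F rho [E_lin _ _] [F_lin _ _] _.
rewrite ptrB3_mapR (eq_mapR _ (fun Y => ptrA_starC Y F_lin)) /starC.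
by rewrite mapLR_comm ?mapR_comp //; exact: Theta_linmap.
Qed.

Lemma starC_J : axiom_J star.
Proof. by move=> n m E _; exact: starC_pimx. Qed.

Lemma starC_QC : axiom_QC star.
Proof.
move=> n rho _; exists (Th rho); split.
- exact: Theta_linmap.
- by move=> m E _; rewrite starC1.
- exact: Theta_commute.
Qed.

Lemma starC_CC : axiom_CC star.
Proof.
move=> n m r d V E lam _ V_iso V_orth _ [E_lin _ _] E_pinch _ _.
pose P i := V i *m adjmx (V i); pose mu i := lam i / (d i)%:R.
have P_orth i j : P i *m P j = if i == j then P i else 0.
  exact: mulmx_range_proj.
have -> : \sum_i lam i *: ((d i)%:R^-1 *: P i) = \sum_i mu i *: P i.
  by apply: eq_bigr => i _; rewrite scalerA.
have E_blocks X : E X = \sum_i E (P i *m X *m P i).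
  by rewrite -E_pinch (linmap_sum E_lin).
transitivity (\sum_i mu i *: mapL (fun X => P i *m X *m P i) (jam E)).
  rewrite /starC {1}(eq_jam E_blocks) jam_sum (linmap_sum (mapL_linmap (Theta_linmap _))).
  apply: eq_bigr => i _; rewrite (jam_sandwich _ _ E_lin) mapL_comp -mapLZ.
  by apply: eq_mapL => X /=; rewrite Theta_proj_block.
apply: eq_bigr => i _.
rewrite starC_pimx embed_mapL (linmapZ (mapL_linmap (linmap_sandwich _ _))).
rewrite (jam_sandwich _ _ E_lin) mapL_comp scalerA.
by congr (_ *: _); apply: eq_mapL => X; rewrite /= /P !mulmxA.
Qed.

End Theta.

End StateOverTime.

Lemma conj_imag_real (R : rcfType) (c : R) :
  ((0 +i* 1)%C * (c%:C)%C : R[i])^* = - ((0 +i* 1)%C * (c%:C)%C).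
Proof. by rewrite -[LHS]/(conjc _) /=; simpc. Qed.

Theorem proposition9 (R : realType) (c : R) :
  let star := starC (0 +i* 1)%C (c%:C)%C in
  state_over_time star /\ axiom_H star /\ axiom_E star /\ axiom_P star /\
  axiom_CC star /\ axiom_J star /\ axiom_QC star.
Proof.
move=> star; split; first exact: starC_state_over_time.
split; first exact/starC_hermitian/conj_imag_real.
split; first exact: starC_E.
split; first exact: starC_P.
split; first exact: starC_CC.
split; first exact: starC_J.
exact: starC_QC.
Qed.
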